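(* Let $n$ be a nonnegative integer and $0<\pi<1$. Let $T$ be the random variable with probability mass function $$P(T=t)=\sum_{k=0}^n \#\mathcal{P}_{k,n-k}(t)\,(1-\pi)^{n-k}\pi^k,\qquad t=0,1,\dots,\lfloor n^2/4\rfloor,$$ and $0$ otherwise. Then $$E(T)=\binom{n}{2}\pi(1-\pi),\qquad E(T^2)=\binom{n}{2}\pi(1-\pi)\left(\frac{2n-1}{3}+\binom{n-2}{2}\pi(1-\pi)\right),$$ and consequently $$V(T)=\binom{n}{2}\pi(1-\pi)\left(\frac{2n-1}{3}-\pi(1-\pi)(2n-3)\right).$$
   Context: For integers $k\ge0$ and $m$, $\#\mathcal{P}_{k,m}(t)$ denotes the number of integer tuples $(\lambda_1,\dots,\lambda_k)$ with $m\ge\lambda_1\ge\cdots\ge\lambda_k\ge0$ and $\lambda_1+\cdots+\lambda_k=t$. Interpretation: in $n$ independent Bernoulli trials each with success probability $\pi$, $T$ is the total, over all successes, of the number of failures occurring after that success (the number of pairs (success, later failure)). Binomial coefficients $\binom{a}{b}$ with $b>a\ge0$ or $b<0$ are $0$. *)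

From mathcomp Require Import all_boot all_order all_algebra.
Set Implicit Arguments. Unset Strict Implicit. Unset Printing Implicit Defensive.
Import Order.TTheory GRing.Theory Num.Theory.

(* #P_{k,m}(t): number of integer tuples (l_1,...,l_k) with
   m >= l_1 >= ... >= l_k >= 0 and l_1 + ... + l_k = t.
   Entries are taken in 'I_(m.+1), i.e. 0 <= l_i <= m. *)
Definition nPart (k m t : nat) : nat :=
  #|[set l : k.-tuple 'I_m.+1 |
      sorted (fun x y : nat => y <= x) (map val (tval l))
      && ((\sum_(x <- tval l) (x : nat)) == t)]|.

Local Open Scope ring_scope.

Definition pmfT (R : realFieldType) (n : nat) (pi : R) (t : nat) : R :=
  if (t <= n ^ 2 %/ 4)%N then
    \sum_(0 <= k < n.+1) (nPart k (n - k) t)%:R * (1 - pi) ^+ (n - k) * pi ^+ k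
  else 0.

(* E(T^j) = sum_t t^j P(T = t); the support is contained in 0 .. floor(n^2/4). *)
Definition momentT (R : realFieldType) (n : nat) (pi : R) (j : nat) : R :=
  \sum_(0 <= t < (n ^ 2 %/ 4).+1) (t%:R) ^+ j * pmfT n pi t.

(* Let K be the number of successes.  The pair (K, T) has law
   P(K = k, T = t) = pi^k (1 - pi)^(n - k) #P_{k,n-k}(t).  Splitting a
   partition in a (k + 1) x (m + 1) box according to whether its largest
   part is m + 1 gives #P_{k+1,m+1}(t) = #P_{k+1,m}(t) + #P_{k,m+1}(t - m - 1), which is
   conditioning on the first trial: a leading failure changes neither K nor T,
   a leading success adds 1 to K and n - K to T.  Hence
   E_{n+1} f(K, T) = (1 - pi) E_n f(K, T) + pi E_n f(K + 1, T + n - K), and the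
   moments of 1, K, K^2, T, TK, T^2 follow in turn by induction on n. *)

From mathcomp Require Import all_boot all_order all_algebra.
From mathcomp Require Import zify ring.
Import Order.TTheory GRing.Theory Num.Theory.
Set Implicit Arguments. Unset Strict Implicit. Unset Printing Implicit Defensive.

Definition count_tuples b k (P : pred (seq nat)) : nat :=
  \sum_(l : k.-tuple 'I_b) P (map val l).

Lemma count_tuples_nil b P : count_tuples b 0 P = P [::].
Proof.
by rewrite /count_tuples (big_pred1 [tuple]) // => l; rewrite [l]tuple0; apply/eqP.
Qed.

Lemma count_tuples_cons b k P :
  count_tuples b k.+1 P = \sum_(x < b) count_tuples b k (fun s => P (val x :: s)).
Proof.
rewrite /count_tuples pair_big /=.
rewrite (reindex (fun u : 'I_b * k.-tuple 'I_b => [tuple of u.1 :: u.2])) //=.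
exists (fun u => (thead u, [tuple of behead u])) => [[x l] _ | u _] /=.
  by congr pair; apply: val_inj.
by rewrite [in RHS](tuple_eta u).
Qed.

Lemma eq_count_tuples {b k} P Q : P =1 Q -> count_tuples b k P = count_tuples b k Q.
Proof. by move=> eqPQ; apply: eq_bigr => l _; rewrite eqPQ. Qed.

Lemma count_tuples_false b k : count_tuples b k (fun _ => false) = 0.
Proof. exact: big1. Qed.

Lemma count_tuples_bounded b c k P : c <= b ->
  count_tuples b k (fun s => all (fun y => y < c) s && P s) = count_tuples c k P.
Proof.
move=> le_cb; elim: k P => [|k IHk] P; first by rewrite !count_tuples_nil.
rewrite !count_tuples_cons.
rewrite (big_ord_widen b (fun x => count_tuples c k (fun s => P (x :: s))) le_cb).
rewrite [in RHS]big_mkcond /=.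
apply: eq_bigr => x _; case: ifP => lt_xc.
  by rewrite -IHk; apply: eq_count_tuples => s /=.
exact: count_tuples_false.
Qed.

Definition is_partition t (s : seq nat) := sorted geq s && (sumn s == t).

Lemma is_partition_cons t y s : is_partition t (y :: s) =
  all (fun x => x < y.+1) s && ((y <= t) && is_partition (t - y) s).
Proof.
rewrite /is_partition /= path_sortedE; last first.
  by move=> a b c le_ab le_ca; apply: leq_trans le_ca le_ab.
have -> : (y + sumn s == t) = (y <= t) && (sumn s == t - y).
  by case: leqP => le_yt /=; [apply/eqP/eqP | apply/eqP]; lia.
by case: (all _ s); case: (y <= t); case: (sorted _ s).
Qed.

Lemma nPartE k m t : nPart k m t = count_tuples m.+1 k (is_partition t).
Proof.
rewrite /nPart /count_tuples -sum1_card big_mkcond /=.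
by apply: eq_bigr => l _; rewrite inE /is_partition sumnE big_map; case: ifP.
Qed.

Lemma nPart0 m t : nPart 0 m t = (t == 0).
Proof. by rewrite nPartE count_tuples_nil /is_partition eq_sym. Qed.

Lemma nPartS k m t :
  nPart k.+1 m t = \sum_(y < m.+1) (y <= t) * nPart k y (t - y).
Proof.
rewrite nPartE count_tuples_cons; apply: eq_bigr => y _.
rewrite (eq_count_tuples (is_partition_cons t y)) count_tuples_bounded //.
case: (y <= t); first by rewrite mul1n nPartE.
by rewrite (eq_count_tuples (_ : _ =1 fun _ => false)) ?count_tuples_false.
Qed.

Lemma nPart_k0 k t : nPart k 0 t = (t == 0).
Proof.
by elim: k t => [|k IHk] t; rewrite ?nPart0 // nPartS big_ord1 mul1n subn0 IHk.
Qed.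

Lemma nPartSS k m t :
  nPart k.+1 m.+1 t = nPart k.+1 m t + (m.+1 <= t) * nPart k m.+1 (t - m.+1).
Proof. by rewrite !nPartS big_ord_recr. Qed.

Lemma nPart_eq0 k m t : k * m < t -> nPart k m t = 0.
Proof.
elim: k m t => [|k IHk] m t lt_kmt; first by rewrite nPart0; case: t lt_kmt.
rewrite nPartS big1 // => y _; rewrite IHk ?muln0 //.
have le_ym : y <= m by rewrite -ltnS.
have : k * y <= k * m by rewrite leq_mul2l le_ym orbT.
lia.
Qed.

Lemma leq_mul_subn_div4 k n : k <= n -> k * (n - k) <= n ^ 2 %/ 4.
Proof.
move=> le_kn; rewrite leq_divRL // mulnC.
by have [+ _] := nat_AGM2 k (n - k); rewrite subnKC.
Qed.

Local Open Scope ring_scope.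

Section BoxSums.
Variable R : comNzRingType.

Definition box_sum (h : nat -> R) k m : R :=
  \sum_(0 <= t < (k * m).+1) h t * (nPart k m t)%:R.

Lemma box_sum_widen h k m B : (k * m < B)%N ->
  \sum_(0 <= t < B) h t * (nPart k m t)%:R = box_sum h k m.
Proof.
move=> lt_kmB; rewrite /box_sum (big_cat_nat _ (n := (k * m).+1)) //=.
rewrite [X in _ + X]big1_seq ?addr0 // => t /andP[_].
by rewrite mem_index_iota => /andP[lt_kmt _]; rewrite nPart_eq0 ?mulr0.
Qed.

Lemma box_sum0m h m : box_sum h 0 m = h 0%N.
Proof. by rewrite /box_sum mul0n big_nat1 nPart0 mulr1. Qed.

Lemma box_sumk0 h k : box_sum h k 0 = h 0%N.
Proof. by rewrite /box_sum muln0 big_nat1 nPart_k0 mulr1. Qed.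

Lemma box_sumSS h k m :
  box_sum h k.+1 m.+1 = box_sum h k.+1 m + box_sum (fun t => h (t + m.+1)%N) k m.+1.
Proof.
rewrite {1}/box_sum.
under eq_bigr do rewrite nPartSS natrD mulrDr.
rewrite big_split box_sum_widen ?ltnS ?leq_mul2l ?leqnSn ?orbT //; congr (_ + _).
rewrite (big_cat_nat _ (n := m.+1)) //=; last by rewrite mulSn; lia.
rewrite big1_seq ?add0r; last first.
  move=> t /andP[_]; rewrite mem_index_iota ltnNge => /andP[_ /negbTE->].
  by rewrite mulr0.
rewrite -{1}(add0n m.+1) big_addn.
under eq_bigr do rewrite leq_addl mul1n addnK.
by apply: box_sum_widen; rewrite mulSn; lia.
Qed.

(* E[f(K, T)] for n trials with success probability p. *)
Definition joint_expect (p : R) n (f : nat -> nat -> R) : R :=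
  \sum_(0 <= k < n.+1) p ^+ k * (1 - p) ^+ (n - k) * box_sum (f k) k (n - k).

Lemma eq_joint_expect p n f g : (forall k t, (k <= n)%N -> f k t = g k t) ->
  joint_expect p n f = joint_expect p n g.
Proof.
move=> eq_fg; apply: eq_big_nat => k /andP[_ lt_kn]; congr (_ * _).
by apply: eq_bigr => t _; rewrite eq_fg.
Qed.

Lemma joint_expect0 p f : joint_expect p 0 f = f 0%N 0%N.
Proof. by rewrite /joint_expect big_nat1 box_sum0m !expr0 !mul1r. Qed.

Lemma joint_expectS p n f : joint_expect p n.+1 f =
  (1 - p) * joint_expect p n f + p * joint_expect p n (fun k t => f k.+1 (t + (n - k))%N).
Proof.
rewrite /joint_expect big_nat_recl // big_nat_recr //.
rewrite [X in _ = _ * X + _]big_nat_recl // [X in _ = _ + _ * X]big_nat_recr //.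
rewrite !subn0 !subnn !box_sum0m !box_sumk0 !expr0 !mulr1 !mul1r addn0.
set A := \sum_(0 <= i < n) _; set B := \sum_(0 <= i < n) _; set C := \sum_(0 <= i < n) _.
have -> : A = (1 - p) * B + p * C.
  rewrite /A /B /C !mulr_sumr -big_split; apply: eq_big_nat => k /andP[_ lt_kn].
  by rewrite subSS -(subnSK lt_kn) box_sumSS mulrDr !exprS /=; ring.
rewrite !exprS /=; ring.
Qed.

End BoxSums.

Section Moments.
Variables (R : numFieldType) (p : R).

Lemma joint_expectD n f g : joint_expect p n (fun k t => f k t + g k t) =
  joint_expect p n f + joint_expect p n g.
Proof.
rewrite /joint_expect -big_split; apply: eq_bigr => k _ /=.
rewrite -mulrDr /box_sum -big_split; congr (_ * _).
by apply: eq_bigr => t _ /=; rewrite mulrDl.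
Qed.

Lemma joint_expectZ n a f :
  joint_expect p n (fun k t => a * f k t) = a * joint_expect p n f.
Proof.
rewrite /joint_expect mulr_sumr; apply: eq_bigr => k _.
rewrite [RHS]mulrCA; congr (_ * _); rewrite /box_sum mulr_sumr.
by apply: eq_bigr => t _; rewrite mulrA.
Qed.

Lemma joint_expect_cst n c : joint_expect p n (fun _ _ => c) = c.
Proof.
elim: n => [|n IHn]; first exact: joint_expect0.
by rewrite joint_expectS IHn; ring.
Qed.

Lemma joint_expectK n : joint_expect p n (fun k _ => k%:R) = n%:R * p.
Proof.
elim: n => [|n IHn]; first by rewrite joint_expect0 mul0r.
rewrite joint_expectS [X in _ + p * X](@eq_joint_expect _ _ _ _ (fun k t => k%:R + 1))
  => [|k t _ /=]; last by rewrite -natr1.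
by rewrite joint_expectD joint_expect_cst IHn -natr1; ring.
Qed.

Lemma joint_expectK2 n :
  joint_expect p n (fun k _ => k%:R ^+ 2) = n%:R * p + n%:R * (n%:R - 1) * p ^+ 2.
Proof.
elim: n => [|n IHn]; first by rewrite joint_expect0 !mul0r expr0n addr0.
rewrite joint_expectS [X in _ + p * X](@eq_joint_expect
    _ _ _ _ (fun k t => k%:R ^+ 2 + (2 * k%:R + 1)))
  => [|k t _ /=]; last by rewrite -natr1; ring.
by rewrite !joint_expectD joint_expectZ joint_expect_cst joint_expectK IHn -natr1; ring.
Qed.

Lemma joint_expectT n :
  joint_expect p n (fun _ t => t%:R) = n%:R * (n%:R - 1) / 2 * p * (1 - p).
Proof.
elim: n => [|n IHn]; first by rewrite joint_expect0 !mul0r.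
rewrite joint_expectS [X in _ + p * X](@eq_joint_expect
    _ _ _ _ (fun k t => t%:R + (n%:R + (-1) * k%:R)))
  => [|k t le_kn /=]; last by rewrite natrD natrB //; ring.
by rewrite !joint_expectD joint_expectZ joint_expect_cst joint_expectK IHn -natr1; field.
Qed.

Lemma joint_expectTK n : joint_expect p n (fun k t => t%:R * k%:R) =
  n%:R * (n%:R - 1) / 2 * p * (1 - p) * (1 + (n%:R - 2) * p).
Proof.
elim: n => [|n IHn]; first by rewrite joint_expect0 !mul0r.
rewrite joint_expectS [X in _ + p * X](@eq_joint_expect _ _ _ _ (fun k t =>
    t%:R * k%:R + (t%:R + ((n%:R - 1) * k%:R + (n%:R + (-1) * k%:R ^+ 2)))))
  => [|k t le_kn /=]; last by rewrite natrD natrB // -natr1; ring.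
rewrite !joint_expectD !joint_expectZ joint_expect_cst joint_expectK joint_expectK2.
by rewrite joint_expectT IHn -natr1; field.
Qed.

Lemma joint_expectT2 n : joint_expect p n (fun _ t => t%:R ^+ 2) =
  n%:R * (n%:R - 1) / 2 * p * (1 - p) *
    ((2 * n%:R - 1) / 3 + (n%:R - 2) * (n%:R - 3) / 2 * p * (1 - p)).
Proof.
elim: n => [|n IHn]; first by rewrite joint_expect0 !mul0r expr0n.
rewrite joint_expectS [X in _ + p * X](@eq_joint_expect _ _ _ _ (fun k t =>
    t%:R ^+ 2 + (2 * n%:R * t%:R + (-2 * (t%:R * k%:R)
      + (n%:R ^+ 2 + (-2 * n%:R * k%:R + k%:R ^+ 2))))))
  => [|k t le_kn /=]; last by rewrite natrD natrB //; ring.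
rewrite !joint_expectD !joint_expectZ joint_expect_cst joint_expectK joint_expectK2.
by rewrite joint_expectT joint_expectTK IHn -natr1; field.
Qed.

End Moments.

Lemma momentT_joint_expect (R : realFieldType) n (pi : R) j :
  momentT n pi j = joint_expect pi n (fun _ t => t%:R ^+ j).
Proof.
rewrite /momentT /joint_expect.
under eq_big_nat => t /andP[_ le_t] do rewrite /pmfT -ltnS le_t mulr_sumr.
rewrite exchange_big; apply: eq_big_nat => k /andP[_ lt_kn].
rewrite -(@box_sum_widen _ _ _ _ (n ^ 2 %/ 4).+1) ?ltnS ?leq_mul_subn_div4 // mulr_sumr.
by apply: eq_bigr => t _; ring.
Qed.

Lemma natr_bin2 (R : numFieldType) n : 'C(n, 2)%:R = n%:R * (n%:R - 1) / 2 :> R.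
Proof.
elim: n => [|n IHn]; first by rewrite bin0n !mul0r.
by rewrite binS bin1 natrD IHn -natr1; field.
Qed.

Theorem theorem2 (R : realFieldType) (n : nat) (pi : R)
    (hpi0 : 0 < pi) (hpi1 : pi < 1) :
  let ET := momentT n pi 1 in
  let ET2 := momentT n pi 2 in
  [/\ ET = 'C(n, 2)%:R * pi * (1 - pi),
      ET2 = 'C(n, 2)%:R * pi * (1 - pi) *
              ((2 * n%:R - 1) / 3 + 'C(n - 2, 2)%:R * pi * (1 - pi))
    & ET2 - ET ^+ 2 = 'C(n, 2)%:R * pi * (1 - pi) *
              ((2 * n%:R - 1) / 3 - pi * (1 - pi) * (2 * n%:R - 3))].
Proof.
move=> ET ET2.
have ET_E : ET = n%:R * (n%:R - 1) / 2 * pi * (1 - pi).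
  rewrite /ET momentT_joint_expect -joint_expectT.
  by apply: eq_joint_expect => k t _; rewrite expr1.
have ET2_E : ET2 = n%:R * (n%:R - 1) / 2 * pi * (1 - pi) *
    ((2 * n%:R - 1) / 3 + (n%:R - 2) * (n%:R - 3) / 2 * pi * (1 - pi)).
  by rewrite /ET2 momentT_joint_expect joint_expectT2.
rewrite ET_E ET2_E !natr_bin2; split; [by [] | | by field].
case: n {ET ET2 ET_E ET2_E} => [|[|n]]; first by rewrite !mul0r.
  by rewrite subrr !mulr0 !mul0r.
by rewrite -[n.+2]addn2 addnK natrD; field.
Qed.
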